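(* Let $a\in[0,\infty)$ and let $\theta:[0,1]\to[0,\infty]$ and $\vartheta:[0,\infty]\to[0,1]$ be continuous and decreasing functions such that (1) $\theta(x)=\infty$ if and only if $x=0$; (2) $\theta(x)=\frac{a}{2}$ if and only if $x=1$; (3) $\vartheta(x)=1$ if and only if $x\in[0,a]$; (4) $\vartheta(x)=0$ if and only if $x=\infty$. Then the function $O_{\theta,\vartheta}:[0,1]^2\to[0,1]$ defined by $O_{\theta,\vartheta}(x,y)=\vartheta(\theta(x)+\theta(y))$ is an overlap function.
   Context: ''Decreasing'' means non-increasing and ''increasing'' means non-decreasing. Arithmetic in $[0,\infty]$ uses $c+\infty=\infty$; continuity on $[0,\infty]$ refers to the usual topology of the extended half-line. An overlap function is a map $O:[0,1]^2\to[0,1]$ that is (O1) commutative, (O2) $O(x,y)=0$ iff $xy=0$, (O3) $O(x,y)=1$ iff $xy=1$, (O4) increasing in each variable, (O5) continuous. *)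

From HB Require Import structures.
From mathcomp Require Import all_boot all_order all_algebra.
From mathcomp Require Import all_classical all_reals topology normedtype ereal.
Unset Strict Implicit. Unset Printing Implicit Defensive.
Import Order.TTheory GRing.Theory Num.Theory numFieldNormedType.Exports.
Local Open Scope classical_set_scope.
Local Open Scope ring_scope.

Definition unitI (R : realType) : set R := [set x : R | 0 <= x <= 1].

Definition unitSq (R : realType) : set (R * R) :=
  [set p : R * R | (0 <= p.1 <= 1) /\ (0 <= p.2 <= 1)].

Definition extHalf (R : realType) : set (\bar R) := [set x : \bar R | (0 <= x)%E].

(* Overlap function on [0,1]^2 (values of O outside [0,1]^2 are irrelevant). *)
Definition is_overlap (R : realType) (O : R -> R -> R) : Prop :=
  (forall x y, unitI R x -> unitI R y -> unitI R (O x y)) /\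
      (forall x y, unitI R x -> unitI R y -> O x y = O y x) /\
      (forall x y, unitI R x -> unitI R y -> (O x y = 0 <-> x * y = 0)) /\
      (forall x y, unitI R x -> unitI R y -> (O x y = 1 <-> x * y = 1)) /\
      (forall x y z, unitI R x -> unitI R y -> unitI R z -> y <= z ->
          O x y <= O x z /\ O y x <= O z x) /\
      {within unitSq R, continuous (fun p : R * R => O p.1 p.2)}.

(** Since [theta] is decreasing with [theta 1 = a/2], both summands of
    [theta x + theta y] are at least [a/2]; hence the sum is at most [a]
    (i.e. [vt] of it is [1]) exactly when [x = y = 1], and it is [+oo]
    (i.e. [vt] of it is [0]) exactly when [x = 0] or [y = 0].  Monotonicity
    comes from composing two decreasing maps, and continuity from the
    continuity of the extended-real addition on [[0, +oo]]. *)
From HB Require Import structures.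
From mathcomp Require Import all_boot all_order all_algebra.
From mathcomp Require Import all_classical all_reals topology normedtype ereal.
From mathcomp Require Import lra.
Import Order.TTheory GRing.Theory Num.Theory numFieldNormedType.Exports.
Local Open Scope classical_set_scope.
Local Open Scope ring_scope.

Lemma within_continuous_comp_sub {T U W : topologicalType} [A : set T]
    [B : set U] [f : T -> U] [g : U -> W] :
  f @` A `<=` B -> {within A, continuous f} -> {within B, continuous g} ->
  {within A, continuous (g \o f)}.
Proof.
move=> fAB /subspace_continuousP fc /subspace_continuousP gc.
apply/subspace_continuousP => x Ax.
apply: cvg_comp (gc _ (fAB _ (imageP _ Ax))) => P BP /=.
apply: filterS2 (withinT A (nbhs_filter x)) (fc x Ax _ BP) => t At.
by apply; apply: fAB; exists t.
Qed.

Lemma within_continuous_fst (T U W : topologicalType) (A : set T) (B : set U)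
    (f : T -> W) :
  {within A, continuous f} -> {within A `*` B, continuous (fun p => f p.1)}.
Proof.
apply: (@within_continuous_comp_sub _ _ _ _ A fst).
  by move=> _ [p [Ap _] <-].
by apply: continuous_subspaceT => p; apply: cvg_fst.
Qed.

Lemma within_continuous_snd (T U W : topologicalType) (A : set T) (B : set U)
    (f : U -> W) :
  {within B, continuous f} -> {within A `*` B, continuous (fun p => f p.2)}.
Proof.
apply: (@within_continuous_comp_sub _ _ _ _ B snd).
  by move=> _ [p [_ Bp] <-].
by apply: continuous_subspaceT => p; apply: cvg_snd.
Qed.

Lemma within_continuous_adde (T : topologicalType) (R : realFieldType)
    (A : set T) (f g : T -> \bar R) :
  (forall x, A x -> (f x +? g x)%E) ->
  {within A, continuous f} -> {within A, continuous g} ->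
  {within A, continuous (fun x => f x + g x)%E}.
Proof.
move=> fg_def /subspace_continuousP fc /subspace_continuousP gc.
apply/subspace_continuousP => x Ax.
by apply: cvgeD; [exact: fg_def | exact: fc | exact: gc].
Qed.

Lemma adde_eq_pinfty {R : numDomainType} (x y : \bar R) :
  x != -oo%E -> y != -oo%E -> ((x + y == +oo) = (x == +oo) || (y == +oo))%E.
Proof. by move=> xNy yNy; apply/negb_inj; rewrite negb_or adde_Neq_pinfty. Qed.

Lemma leeD_bounds_eq {R : realDomainType} [c d : R] [u v : \bar R] :
  (c%:E <= u)%E -> (d%:E <= v)%E -> (u + v <= (c + d)%:E)%E ->
  u = c%:E /\ v = d%:E.
Proof.
case: u => [r| |]; case: v => [s| |] //=; rewrite ?lee_fin // => cr ds rs.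
by split; congr EFin; lra.
Qed.

Lemma unitI_mul_eq1 {R : realType} (x y : R) :
  unitI R x -> unitI R y -> (x * y = 1 <-> x = 1 /\ y = 1).
Proof.
move=> /andP[x_ge0 x_le1] /andP[y_ge0 y_le1].
by split=> [xy1 | [-> ->]]; [split; nra | rewrite mulr1].
Qed.

Definition overlap_of {R : realType} (theta : R -> \bar R) (vt : \bar R -> R)
    (x y : R) : R :=
  vt (theta x + theta y)%E.

Lemma overlap_ofC {R : realType} (theta : R -> \bar R) (vt : \bar R -> R)
    (x y : R) :
  overlap_of theta vt x y = overlap_of theta vt y x.
Proof. by rewrite /overlap_of addeC. Qed.

Section OverlapOf.
Context {R : realType} {a : R} {theta : R -> \bar R} {vt : \bar R -> R}.
Hypothesis theta_ge0 : forall x, unitI R x -> extHalf R (theta x).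
Hypothesis theta_cont : {within unitI R, continuous theta}.
Hypothesis theta_nonincr :
  forall x y, unitI R x -> unitI R y -> x <= y -> (theta y <= theta x)%E.
Hypothesis vt_unitI : forall x, extHalf R x -> unitI R (vt x).
Hypothesis vt_cont : {within extHalf R, continuous vt}.
Hypothesis vt_nonincr :
  forall x y, extHalf R x -> extHalf R y -> (x <= y)%E -> vt y <= vt x.
Hypothesis theta_eq_pinfty :
  forall x, unitI R x -> (theta x = +oo%E <-> x = 0).
Hypothesis theta_eq_half :
  forall x, unitI R x -> (theta x = (a / 2)%:E <-> x = 1).
Hypothesis vt_eq1 : forall x, extHalf R x -> (vt x = 1 <-> (x <= a%:E)%E).
Hypothesis vt_eq0 : forall x, extHalf R x -> (vt x = 0 <-> x = +oo%E).

Local Notation O := (overlap_of theta vt).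

Let unitI1 : unitI R 1. Proof. by rewrite /unitI /= ler01 lexx. Qed.

Let theta1 : theta 1 = (a / 2)%:E. Proof. exact/(theta_eq_half _ unitI1). Qed.

Let theta_sum_ge0 x y :
  unitI R x -> unitI R y -> extHalf R (theta x + theta y)%E.
Proof. by move=> ux uy; apply: adde_ge0; apply: theta_ge0. Qed.

Lemma overlap_of_unitI x y : unitI R x -> unitI R y -> unitI R (O x y).
Proof. by move=> ux uy; apply/vt_unitI/theta_sum_ge0. Qed.

Lemma overlap_of_eq0 x y :
  unitI R x -> unitI R y -> (O x y = 0 <-> x * y = 0).
Proof.
move=> ux uy; rewrite vt_eq0; last exact: theta_sum_ge0.
have theta_eqyE z : unitI R z -> (theta z == +oo%E) = (z == 0).
  by move=> uz; apply/eqP/eqP => /(theta_eq_pinfty _ uz).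
have theta_Nny z : unitI R z -> theta z != -oo%E.
  by move=> uz; rewrite -ltNye (lt_le_trans _ (theta_ge0 _ uz)) ?ltNy0.
split=> /eqP.
  by rewrite adde_eq_pinfty ?theta_Nny // !theta_eqyE // -mulf_eq0 => /eqP.
by rewrite mulf_eq0 -!theta_eqyE // -adde_eq_pinfty ?theta_Nny // => /eqP.
Qed.

Lemma theta_ge_half x : unitI R x -> ((a / 2)%:E <= theta x)%E.
Proof.
move=> ux; rewrite -theta1.
by apply: theta_nonincr => //; case/andP: ux.
Qed.

Lemma overlap_of_eq1 x y :
  unitI R x -> unitI R y -> (O x y = 1 <-> x * y = 1).
Proof.
move=> ux uy; rewrite vt_eq1 ?unitI_mul_eq1 //; last exact: theta_sum_ge0.
split=> [|[-> ->]].
  rewrite {1}(splitr a).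
  move=> /(leeD_bounds_eq (theta_ge_half _ ux) (theta_ge_half _ uy)).
  by case=> /(theta_eq_half _ ux)-> /(theta_eq_half _ uy)->.
by rewrite theta1 -EFinD -splitr.
Qed.

Lemma overlap_of_ler x y z :
  unitI R x -> unitI R y -> unitI R z -> y <= z -> O x y <= O x z.
Proof.
move=> ux uy uz yz; apply: vt_nonincr; try exact: theta_sum_ge0.
by apply: leeD => //; apply: theta_nonincr.
Qed.

Lemma overlap_of_continuous :
  {within unitSq R, continuous (fun p : R * R => O p.1 p.2)}.
Proof.
have sum_cont : {within unitI R `*` unitI R,
    continuous (fun p : R * R => theta p.1 + theta p.2)%E}.
  apply: within_continuous_adde.
  - by move=> p [u1 u2]; apply: ge0_adde_def; rewrite inE; apply: theta_ge0.
  - exact: within_continuous_fst.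
  - exact: within_continuous_snd.
have sum_ge0 : (fun p : R * R => theta p.1 + theta p.2)%E @` unitSq R
    `<=` extHalf R.
  by move=> _ [p [u1 u2] <-]; apply: theta_sum_ge0.
exact: (within_continuous_comp_sub sum_ge0 sum_cont vt_cont).
Qed.
End OverlapOf.

Theorem theorem3p2 (R : realType) (a : R) (theta : R -> \bar R) (vt : \bar R -> R) :
  0 <= a ->
  (* theta : [0,1] -> [0,+oo], continuous, decreasing *)
  (forall x, unitI R x -> extHalf R (theta x)) ->
  {within unitI R, continuous theta} ->
  (forall x y, unitI R x -> unitI R y -> x <= y -> (theta y <= theta x)%E) ->
  (* vt : [0,+oo] -> [0,1], continuous, decreasing *)
  (forall x, extHalf R x -> unitI R (vt x)) ->
  {within extHalf R, continuous vt} ->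
  (forall x y, extHalf R x -> extHalf R y -> (x <= y)%E -> vt y <= vt x) ->
  (* (1) *) (forall x, unitI R x -> (theta x = +oo%E <-> x = 0)) ->
  (* (2) *) (forall x, unitI R x -> (theta x = ((a / 2)%:E) <-> x = 1)) ->
  (* (3) *) (forall x, extHalf R x -> (vt x = 1 <-> (x <= a%:E)%E)) ->
  (* (4) *) (forall x, extHalf R x -> (vt x = 0 <-> x = +oo%E)) ->
  is_overlap R (fun x y => vt (theta x + theta y)%E).
Proof.
move=> _ theta_ge0 theta_cont theta_nonincr vt_unitI vt_cont vt_nonincr
  theta_eq_pinfty theta_eq_half vt_eq1 vt_eq0.
change (is_overlap R (overlap_of theta vt)).
split; first exact: overlap_of_unitI.
split; first by move=> x y _ _; apply: overlap_ofC.
split; first exact: (overlap_of_eq0 theta_ge0 theta_eq_pinfty vt_eq0).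
split.
  exact: (overlap_of_eq1 theta_ge0 theta_nonincr theta_eq_half vt_eq1).
split; last exact: (overlap_of_continuous theta_ge0 theta_cont vt_cont).
move=> x y z ux uy uz yz; rewrite (overlap_ofC _ _ y) (overlap_ofC _ _ z).
by split; apply: overlap_of_ler.
Qed.
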